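(* Let $q > r \ge 1$ be integers. If $S_1$ and $S_2$ are $K_q^r$-cliques such that $S_1 \cap S_2 = \{e\}$ for some $r$-edge $e$, then there exists an independent $K_q^r$-hinge for $S_1$ and $S_2$.
   Context: An $r$-graph is identified with its edge set; $V(G)$ denotes its vertex set. $K_q^r$ is the complete $r$-graph on $q$ vertices, and a $K_q^r$-clique is an $r$-graph isomorphic to $K_q^r$. A $K_q^r$-decomposition of an $r$-graph $G$ is a partition of the edges of $G$ into $K_q^r$-cliques. A vertex set $X$ is independent in an $r$-graph $H$ if no edge of $H$ is contained in $X$. Given two $K_q^r$-cliques $S, S'$ with $S \cap S' = \{e\}$ for an $r$-edge $e$, a $K_q^r$-hinge for $S$ and $S'$ is an $r$-graph $H$ that is edge-disjoint from $S \cup S'$ such that $H \cup (S \setminus \{e\})$ has a $K_q^r$-decomposition and $H \cup (S' \setminus \{e\})$ has a $K_q^r$-decomposition. The hinge is independent if $V(S) \cup V(S')$ is independent in $H$. *)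

From HB Require Import structures.
From mathcomp Require Import all_boot.
From mathcomp Require Import finmap.
Set Implicit Arguments. Unset Strict Implicit. Unset Printing Implicit Defensive.
Local Open Scope fset_scope.

(* Vertices are natural numbers (an infinite supply, so hinges may use new
   vertices). An r-graph is a finite set of edges, each edge a finite set of
   exactly r vertices. *)
Definition edge := {fset nat}.
Definition graph := {fset edge}.

Definition is_rgraph (r : nat) (G : graph) : Prop :=
  forall e, e \in G -> #|` e| = r.

Definition vset (G : graph) : {fset nat} := \bigcup_(e <- G) e.

Definition complete_on (r : nat) (X : {fset nat}) : graph :=
  [fset e in fpowerset X | #|` e| == r].

Definition is_clique (q r : nat) (S : graph) : Prop :=
  exists X : {fset nat}, #|` X| = q /\ S = complete_on r X.

Definition has_decomposition (q r : nat) (G : graph) : Prop :=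
  exists P : seq graph,
    (forall S, S \in P -> is_clique q r S) /\
    (forall i j, (i < size P)%N -> (j < size P)%N -> i <> j ->
        [disjoint nth fset0 P i & nth fset0 P j]) /\
    G = \bigcup_(S <- P) S.

Definition is_hinge (q r : nat) (S S' : graph) (e : edge) (H : graph) : Prop :=
  is_rgraph r H /\
  [disjoint H & S `|` S'] /\
  has_decomposition q r (H `|` (S `\ e)) /\
  has_decomposition q r (H `|` (S' `\ e)).

Definition independent (X : {fset nat}) (H : graph) : Prop :=
  forall f, f \in H -> ~ (f `<=` X).

Definition is_indep_hinge (q r : nat) (S S' : graph) (e : edge) (H : graph) : Prop :=
  is_hinge q r S S' e H /\ independent (vset S `|` vset S') H.

(* Fix a finite field F with q distinct points al_0, ..., al_(q-1) and an injective
   labelling phi of 'I_q * F by vertices.  By Lagrange interpolation, every r-set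
   meeting r distinct columns phi(j, F) lies on the graph {phi(j, c(al_j) + w_j)} of
   exactly one polynomial c of degree < r; so the cliques on these graphs partition
   one fixed r-graph G, whatever the shift w.  Hence G minus the clique of w and G
   minus the clique of w' both decompose: G is a trade between any two of them.
   Write S1 = K(X1), S2 = K(X2) for the two cliques, enumerate X1 and X2 with e
   first, and let T replace the q - r vertices of X1 outside e by new ones.  Two
   labellings sharing only T give trades G1 between S1 and K(T) and G2 between
   K(T) and S2, and H = (G1 u G2) \ (S1 u S2) works: H u (S1 \ e) splits as
   (G1 \ K(T)) u (G2 \ S2), symmetrically for S2, and an edge of H inside X1 u X2
   would lie in X1 or in X2, i.e. in S1 or S2. *)

From HB Require Import structures.
From mathcomp Require Import all_boot all_algebra.
From mathcomp Require Import finmap zify.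
Set Implicit Arguments. Unset Strict Implicit. Unset Printing Implicit Defensive.
Import GRing.Theory.
Local Open Scope fset_scope.

Lemma complete_onP r X f :
  reflect (f `<=` X /\ #|` f| = r) (f \in complete_on r X).
Proof.
rewrite /complete_on !inE /= -[X in X && _]/(f \in fpowerset X) fpowersetE.
by apply: (iffP andP) => [[-> /eqP ->]|[-> ->]].
Qed.

Lemma vset_complete_on r X : vset (complete_on r X) `<=` X.
Proof.
apply/fsubsetP => u /bigfcupP [f /andP [/complete_onP [fX _] _]].
exact: fsubsetP.
Qed.

Lemma sub_vset (G : graph) f : f \in G -> f `<=` vset G.
Proof. by move=> fG; apply/fsubsetP => u uf; apply/bigfcupP; exists f; rewrite ?fG. Qed.

Lemma independentS (X Y : {fset nat}) (H : graph) :
  X `<=` Y -> independent Y H -> independent X H.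
Proof. by move=> XY indY f fH fX; apply: indY fH (fsubset_trans fX XY). Qed.

Lemma rgraph_meet_sub r (G1 G2 : graph) X :
  is_rgraph r G1 -> vset G1 `&` vset G2 `<=` X -> G1 `&` G2 `<=` complete_on r X.
Proof.
move=> rG1 V12; apply/fsubsetP => f /fsetIP [f1 f2]; apply/complete_onP.
by split; [apply: fsubset_trans V12; rewrite fsubsetI !sub_vset | apply: rG1].
Qed.

Lemma complete_on_meet_sub r (X1 X2 : {fset nat}) e : 0 < r ->
  complete_on r X1 `&` complete_on r X2 = [fset e] -> X1 `&` X2 `<=` e.
Proof.
move=> r_gt0 S12; have : e \in complete_on r X1 `&` complete_on r X2 by rewrite S12 inE.
move=> /fsetIP [/complete_onP [e_sub1 card_e] /complete_onP [e_sub2 _]].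
apply/fsubsetP => u /fsetIP [u1 u2]; apply/negPn/negP => u_notin.
have [w we] : exists w, w \in e.
  by apply/fset0Pn; rewrite -cardfs_gt0 card_e.
pose e' := u |` (e `\ w).
have e'_in X : u \in X -> e `<=` X -> e' \in complete_on r X.
  move=> uX eX; apply/complete_onP; split.
    by rewrite fsubUset fsub1set uX (fsubset_trans (fsubsetDl _ _) eX).
  rewrite cardfsU1 in_fsetD1 (negPf u_notin) andbF /=.
  by move: card_e; rewrite (cardfsD1 w) we add1n => ->.
have : e' \in [fset e] by rewrite -S12 inE !e'_in.
by rewrite inE => /eqP e'E; move: u_notin; rewrite -e'E !inE eqxx.
Qed.

Lemma has_decompositionP q r G :
  has_decomposition q r G <->
  exists P : seq graph, [/\ {in P, forall S, is_clique q r S},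
    pairwise (fun S S' : graph => [disjoint S & S']) P & G = \bigcup_(S <- P) S].
Proof.
split=> [[P [cP [dP ->]]]|[P [cP dP ->]]]; exists P; split=> //.
  by apply/(pairwiseP fset0) => i j il jl /ltn_eqF/eqP; apply: dP.
split=> // i j il jl /eqP; rewrite neq_ltn.
have dnth := (pairwiseP fset0 dP).
by case/orP=> [ij|ji]; last rewrite fdisjoint_sym; apply: dnth.
Qed.

Lemma has_decomposition_bigcup q r (T : eqType) (s : seq T) (K : T -> graph) :
  uniq s -> {in s, forall c, is_clique q r (K c)} ->
  {in s &, forall c c', c != c' -> [disjoint K c & K c']} ->
  has_decomposition q r (\bigcup_(c <- s) K c).
Proof.
move=> us cK dK; apply/has_decompositionP; exists (map K s); split.
- by move=> S /mapP [c cs ->]; apply: cK.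
- rewrite pairwise_map; apply: (sub_in_pairwise dK); first exact/allP.
  by rewrite -uniq_pairwise.
- by rewrite big_map.
Qed.

Lemma has_decompositionU q r (A B : graph) :
  has_decomposition q r A -> has_decomposition q r B -> [disjoint A & B] ->
  has_decomposition q r (A `|` B).
Proof.
move=> /has_decompositionP [P [cP dP ->]] /has_decompositionP [Q [cQ dQ ->]] dPQ.
apply/has_decompositionP; exists (P ++ Q); split.
- by move=> S; rewrite mem_cat => /orP [/cP|/cQ].
- rewrite pairwise_cat dP dQ !andbT.
  apply/allrelP => S S' SP S'Q.
  have SA := @bigfcup_sup _ _ P S xpredT id SP isT.
  have S'B := @bigfcup_sup _ _ Q S' xpredT id S'Q isT.
  apply: fdisjointWl SA _; rewrite fdisjoint_sym.
  by apply: fdisjointWl S'B _; rewrite fdisjoint_sym.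
- by rewrite big_cat.
Qed.

Definition is_trade q r (G A B : graph) : Prop :=
  [/\ is_rgraph r G, A `<=` G, B `<=` G,
      has_decomposition q r (G `\` A) & has_decomposition q r (G `\` B)].

Lemma is_tradeC q r G A B : is_trade q r G A B -> is_trade q r G B A.
Proof. by case. Qed.

Lemma hinge_side_decomposition q r (G1 G2 S1 S2 T : graph) e :
  is_trade q r G1 S1 T -> is_trade q r G2 T S2 -> G1 `&` G2 `<=` T ->
  S1 `&` S2 = [fset e] ->
  has_decomposition q r ((G1 `|` G2) `\` (S1 `|` S2) `|` (S1 `\ e)).
Proof.
move=> [_ sS1 sT1 _ dT1] [_ sT2 sS2 _ dS2] /fsubsetP G12T S12.
suff -> : (G1 `|` G2) `\` (S1 `|` S2) `|` (S1 `\ e) = (G1 `\` T) `|` (G2 `\` S2).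
  apply: has_decompositionU => //; apply/fdisjointP => f /fsetDP [f1 fT].
  by apply: contraNN fT => /fsetDP [f2 _]; apply: G12T; rewrite inE f1.
apply/fsetP => f; have S12f : (f \in S1) && (f \in S2) = (f == e).
  by rewrite -in_fsetI S12 inE.
have := fsubsetP sS1 f; have := fsubsetP sT1 f; have := fsubsetP sT2 f.
have := fsubsetP sS2 f; have := G12T f; move: S12f; rewrite !inE.
case: (f \in G1); case: (f \in G2); case: (f \in S1); case: (f \in S2);
  case: (f \in T); case: (f == e) => //= _ h1 h2 h3 h4 h5;
  by [move/(_ isT): h1 | move/(_ isT): h2 | move/(_ isT): h3 | move/(_ isT): h4
     | move/(_ isT): h5].
Qed.

Lemma hinge_of_trades q r (G1 G2 S1 S2 T : graph) e :
  is_trade q r G1 S1 T -> is_trade q r G2 T S2 -> G1 `&` G2 `<=` T ->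
  S1 `&` S2 = [fset e] -> is_hinge q r S1 S2 e ((G1 `|` G2) `\` (S1 `|` S2)).
Proof.
move=> t1 t2 G12T S12; split; [|split; [|split]].
- by case: t1 => rG1 *; case: t2 => rG2 * f /fsetDP [/fsetUP [/rG1|/rG2]].
- by apply/fdisjointP => f /fsetDP [].
- exact: hinge_side_decomposition t1 t2 G12T S12.
- rewrite [G1 `|` G2]fsetUC [S1 `|` S2]fsetUC.
  by apply: hinge_side_decomposition (is_tradeC t2) (is_tradeC t1) _ _;
    rewrite fsetIC.
Qed.

Lemma independent_trade_diff r (G1 G2 : graph) X1 X2 :
  is_rgraph r G1 -> is_rgraph r G2 ->
  vset G1 `&` (X1 `|` X2) `<=` X1 -> vset G2 `&` (X1 `|` X2) `<=` X2 ->
  independent (X1 `|` X2)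
    ((G1 `|` G2) `\` (complete_on r X1 `|` complete_on r X2)).
Proof.
move=> rG1 rG2 V1 V2 f /fsetDP [fG fS] fX; move/negP: fS; apply.
have inK G X : is_rgraph r G -> vset G `&` (X1 `|` X2) `<=` X -> f \in G ->
    f \in complete_on r X.
  move=> rG VG fG'; apply/complete_onP; split; last exact: rG.
  by apply: fsubset_trans VG; rewrite fsubsetI sub_vset.
by case/fsetUP: fG => fG; rewrite inE ?(inK _ _ rG1 V1 fG) ?(inK _ _ rG2 V2 fG) ?orbT.
Qed.

Lemma Vandermonde_unit (F : fieldType) n (a : 'I_n -> F) :
  injective a -> Vandermonde n (\row_i a i) \in unitmx.
Proof.
move=> a_inj; rewrite unitmxE det_Vandermonde unitfE prodf_seq_neq0.
apply/allP => i _; rewrite prodf_seq_neq0; apply/allP => j _ /=.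
apply/implyP => lt_ij; rewrite !mxE subr_eq0; apply: contraTneq lt_ij => /a_inj ->.
by rewrite ltnn.
Qed.

Section Interpolation.
Local Open Scope ring_scope.
Variables (F : fieldType) (q r : nat) (al : 'I_q -> F).
Hypothesis al_inj : injective al.

Definition polyval (c : 'rV[F]_r) (w : 'I_q -> F) (j : 'I_q) : F :=
  \sum_(l < r) c 0 l * al j ^+ l + w j.

Variables (I : {set 'I_q}) (card_I : #|I| = r).

Let pt (i : 'I_r) : 'I_q := enum_val (cast_ord (esym card_I) i).
Let V := Vandermonde r (\row_i al (pt i)).

Let V_unit : V \in unitmx.
Proof.
apply: Vandermonde_unit => i j /al_inj /enum_val_inj; exact: cast_ord_inj.
Qed.

Let pt_onto j : j \in I -> exists i, pt i = j.
Proof.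
move=> Ij; exists (cast_ord card_I (enum_rank_in Ij j)).
by rewrite /pt cast_ordK enum_rankK_in.
Qed.

Let polyval_pt c w i : polyval c w (pt i) = (c *m V) 0 i + w (pt i).
Proof. by rewrite /polyval !mxE; congr (_ + _); apply: eq_bigr => l _; rewrite !mxE. Qed.

Lemma polyval_inj_on c c' w :
  {in I, forall j, polyval c w j = polyval c' w j} -> c = c'.
Proof.
move=> eq_cc'; apply: (can_inj (mulmxK V_unit)); apply/rowP => i.
by have := eq_cc' (pt i) (enum_valP _); rewrite !polyval_pt => /addIr.
Qed.

Lemma polyval_interpolation w (g : 'I_q -> F) :
  exists c, {in I, forall j, polyval c w j = g j}.
Proof.
exists ((\row_i (g (pt i) - w (pt i))) *m invmx V) => _ /pt_onto [i <-].
by rewrite polyval_pt mulmxKV // mxE subrK.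
Qed.

End Interpolation.

Section Selection.
Variables (F : Type) (q r : nat) (phi : 'I_q * F -> nat).
Hypothesis phi_inj : injective phi.

Definition selection (w : 'I_q -> F) : {fset nat} := [fset phi (j, w j) | j : 'I_q].

Lemma selectionP w u : reflect (exists j, u = phi (j, w j)) (u \in selection w).
Proof.
apply: (iffP idP) => [/imfsetP [j _ ->]|[j ->]]; first by exists j.
by apply/imfsetP; exists j.
Qed.

Lemma eq_selection w w' : w =1 w' -> selection w = selection w'.
Proof.
by move=> eq_ww'; apply/fsetP => u; apply/selectionP/selectionP => -[j ->];
  exists j; rewrite eq_ww'.
Qed.

Lemma card_selection w : #|` selection w| = q.
Proof.
rewrite card_imfset /=; last by move=> j j' /phi_inj [].
by rewrite -cardE card_ord.
Qed.

Definition columns (w : 'I_q -> F) (f : {fset nat}) := [set j | phi (j, w j) \in f]%SET.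

Lemma card_columns w f : f \in complete_on r (selection w) -> #|columns w f| = r.
Proof.
move=> /complete_onP [f_sub <-].
have fE : f = [fset phi (j, w j) | j in columns w f].
  apply/fsetP => u; apply/idP/imfsetP => [uf|[j]]; last by rewrite inE => + ->.
  by have /selectionP [j E] := fsubsetP f_sub u uf; exists j; rewrite // inE -E.
rewrite [in RHS]fE card_imfset /=; last by move=> j j' /phi_inj [].
by rewrite -cardE.
Qed.

Lemma sub_selection w w' f : f `<=` selection w ->
  {in columns w f, forall j, w j = w' j} -> f `<=` selection w'.
Proof.
move=> f_sub eq_ww'; apply/fsubsetP => u uf.
have /selectionP [j E] := fsubsetP f_sub u uf.
by apply/selectionP; exists j; rewrite E eq_ww' // inE -E.
Qed.

Lemma eq_on_columns w w' f : f `<=` selection w -> f `<=` selection w' ->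
  {in columns w f, forall j, w j = w' j}.
Proof.
move=> f_sub f_sub' j; rewrite inE => /(fsubsetP f_sub') /selectionP [j' E].
by case: (phi_inj E) => <-.
Qed.

End Selection.

Section Design.
Variables (F : finFieldType) (q r : nat) (al : 'I_q -> F) (phi : 'I_q * F -> nat).
Hypotheses (al_inj : injective al) (phi_inj : injective phi).

Definition block (w : 'I_q -> F) (c : 'rV[F]_r) : graph :=
  complete_on r (selection phi (polyval al c w)).

Definition design (w : 'I_q -> F) : graph := \bigcup_(c <- enum 'rV[F]_r) block w c.

Lemma block_clique w c : is_clique q r (block w c).
Proof. by exists (selection phi (polyval al c w)); rewrite (card_selection phi_inj). Qed.

Lemma block_disjoint w c c' : c != c' -> [disjoint block w c & block w c'].
Proof.
move=> /eqP neq_cc'; apply/fdisjointP => f f_in.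
apply/negP => /complete_onP [f_sub' _]; apply: neq_cc'.
apply: (polyval_inj_on al_inj (card_columns phi_inj f_in)).
apply: (eq_on_columns phi_inj) f_sub'.
by case/complete_onP: f_in.
Qed.

Lemma block0 w : block w 0%R = complete_on r (selection phi w).
Proof.
rewrite /block (@eq_selection _ _ phi _ w) // => j.
by rewrite /polyval big1 ?add0r // => l _; rewrite mxE mul0r.
Qed.

Lemma design_sub w w' : design w `<=` design w'.
Proof.
apply/fsubsetP => f /bigfcupP [c _ f_in].
have [c' eq_c'] :=
  polyval_interpolation al_inj (card_columns phi_inj f_in) w' (polyval al c w).
apply/bigfcupP; exists c'; rewrite ?mem_enum //.
case/complete_onP: f_in => f_sub fr; apply/complete_onP; split=> //.
by apply: sub_selection f_sub _ => j /eq_c'.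
Qed.

Lemma design_shift w w' : design w = design w'.
Proof. by apply/eqP; rewrite eqEfsubset !design_sub. Qed.

Lemma block_sub_design w c : block w c `<=` design w.
Proof. by apply/fsubsetP => f fK; apply/bigfcupP; exists c; rewrite ?mem_enum. Qed.

Lemma has_decomposition_design_diff w :
  has_decomposition q r (design w `\` block w 0%R).
Proof.
have -> : design w `\` block w 0%R =
    \bigcup_(c <- [seq c <- enum 'rV[F]_r | c != 0%R]) block w c.
  apply/fsetP => f; apply/fsetDP/bigfcupP => [[/bigfcupP [c _ f_in] f_notin]|[c]].
    have c_neq0 : c != 0%R by apply: contraNneq f_notin => c0; rewrite -c0.
    by exists c; rewrite // mem_filter mem_enum c_neq0.
  rewrite andbT mem_filter => /andP [c_neq0 _] f_in; split.
    exact: fsubsetP (block_sub_design w c) f f_in.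
  exact: (fdisjointP (block_disjoint w c_neq0)).
apply: has_decomposition_bigcup; first by rewrite filter_uniq ?enum_uniq.
  by move=> c _; apply: block_clique.
by move=> c c' _ _; apply: block_disjoint.
Qed.

Lemma design_trade w0 w w' :
  is_trade q r (design w0)
    (complete_on r (selection phi w)) (complete_on r (selection phi w')).
Proof.
split; rewrite -?block0.
- by move=> f /bigfcupP [c _ /complete_onP []].
- by rewrite (design_shift w0 w) block_sub_design.
- by rewrite (design_shift w0 w') block_sub_design.
- by rewrite (design_shift w0 w); apply: has_decomposition_design_diff.
- by rewrite (design_shift w0 w'); apply: has_decomposition_design_diff.
Qed.

Lemma vset_design w : vset (design w) `<=` [fset phi x | x : 'I_q * F].
Proof.
apply/fsubsetP => u /bigfcupP [f /andP [/bigfcupP [c _ /complete_onP [f_sub _]] _] uf].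
have /selectionP [j ->] := fsubsetP f_sub u uf.
by apply/imfsetP; exists (j, polyval al c w j).
Qed.

End Design.

Definition enum_ext q (e X : {fset nat}) (j : 'I_q) : nat :=
  nth 0 (enum_fset e ++ enum_fset (X `\` e)) j.

Lemma enum_ext_head q r (e X Y : {fset nat}) (j : 'I_q) :
  #|` e| = r -> j < r -> enum_ext e X j = enum_ext e Y j.
Proof. by move=> card_e lt_jr; rewrite /enum_ext !nth_cat card_e lt_jr. Qed.

Section EnumExt.
Variables (q r : nat) (e X : {fset nat}).
Hypotheses (card_e : #|` e| = r) (e_sub : e `<=` X) (card_X : #|` X| = q).

Let s := enum_fset e ++ enum_fset (X `\` e).

Let mem_s u : (u \in s) = (u \in X).
Proof.
rewrite mem_cat in_fsetD; case: (boolP (u \in e)) => [ue|_] //=.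
by rewrite (fsubsetP e_sub).
Qed.

Let uniq_s : uniq s.
Proof.
rewrite cat_uniq !fset_uniq /= andbT; apply/hasPn => u.
by rewrite in_fsetD => /andP [].
Qed.

Let size_s : size s = q.
Proof. by rewrite -card_X -(perm_size (uniq_perm uniq_s (fset_uniq X) mem_s)). Qed.

Lemma enum_ext_inj : injective (@enum_ext q e X).
Proof.
by move=> i j /eqP; rewrite /enum_ext nth_uniq ?size_s // => /eqP /ord_inj.
Qed.

Lemma enum_ext_image : [fset enum_ext e X j | j : 'I_q] = X.
Proof.
apply/fsetP => u; apply/imfsetP/idP => [[j _ ->]|uX].
  by rewrite -mem_s mem_nth ?size_s.
have lt_iq : index u s < q by rewrite -size_s index_mem mem_s.
by exists (Ordinal lt_iq); rewrite //= /enum_ext nth_index ?mem_s.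
Qed.

Lemma enum_ext_in (j : 'I_q) : enum_ext e X j \in X.
Proof. by rewrite -[in X in _ \in X]enum_ext_image; apply/imfsetP; exists j. Qed.

Lemma enum_ext_mem_head (j : 'I_q) : (enum_ext e X j \in e) = (j < r).
Proof.
rewrite /enum_ext nth_cat card_e; case: ltnP => lt_jr.
  by rewrite mem_nth ?card_e.
have : nth 0 (enum_fset (X `\` e)) (j - r) \in X `\` e.
  apply: mem_nth; rewrite -(ltn_add2l r) subnKC //.
  by move: size_s; rewrite size_cat card_e => ->.
by rewrite in_fsetD => /andP [/negPf].
Qed.

End EnumExt.

Section Labelling.
Variables (F : nzRingType) (q r N : nat) (y z : 'I_q -> nat) (fresh : 'I_q * F -> nat).
Hypotheses (y_inj : injective y) (z_inj : injective z) (fresh_inj : injective fresh).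
Hypotheses (yz_head : forall j : 'I_q, j < r -> y j = z j)
  (yz_tail : forall j j' : 'I_q, y j = z j' -> j' < r).
Hypotheses (y_lt : forall j, y j < N) (z_lt : forall j, z j < N)
  (fresh_ge : forall x, N <= fresh x).

Definition label (x : 'I_q * F) : nat :=
  if x.2 == 0%R then y x.1 else if (x.2 == 1%R) && (r <= x.1) then z x.1 else fresh x.

Definition tail_ones (j : 'I_q) : F := if r <= j then 1%R else 0%R.

Lemma label_inj : injective label.
Proof.
have y_fresh j x : y j <> fresh x by move=> E; have := y_lt j; rewrite E ltnNge fresh_ge.
have z_fresh j x : z j <> fresh x by move=> E; have := z_lt j; rewrite E ltnNge fresh_ge.
move=> [j s] [j' s']; rewrite /label /=.
case: (s =P 0%R) => [->|_]; case: (s' =P 0%R) => [->|_].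
- by move/y_inj ->.
- case: ifP => [/andP [/eqP -> le_rj'] /yz_tail|_ /y_fresh] //.
  by rewrite ltnNge le_rj'.
- case: ifP => [/andP [/eqP -> le_rj] E|_ E]; last by case: (y_fresh _ _ (esym E)).
  by have := yz_tail (esym E); rewrite ltnNge le_rj.
case: ifP => [/andP [/eqP -> _]|_]; case: ifP => [/andP [/eqP -> _]|_].
- by move/z_inj ->.
- by move/z_fresh.
- by move=> E; case: (z_fresh _ _ (esym E)).
- exact: fresh_inj.
Qed.

Lemma selection_label0 : selection label (fun _ => 0%R) = [fset y j | j : 'I_q].
Proof.
by apply/fsetP => u; apply/selectionP/imfsetP => [][j]; [move=> ->|move=> _ ->];
  exists j; rewrite // /label /= eqxx.
Qed.

Lemma selection_label_tail_ones : selection label tail_ones = [fset z j | j : 'I_q].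
Proof.
have label_tail_ones j : label (j, tail_ones j) = z j.
  rewrite /label /tail_ones /=.
  by case: leqP => [_|/yz_head <-]; rewrite ?oner_eq0 eqxx.
by apply/fsetP => u; apply/selectionP/imfsetP => [][j]; [move=> ->|move=> _ ->];
  exists j; rewrite // label_tail_ones.
Qed.

Lemma label_cases x :
  label x \in [fset y j | j : 'I_q] `|` [fset z j | j : 'I_q] \/ label x = fresh x.
Proof.
rewrite /label; case: ifP => _; first by left; rewrite inE in_imfset.
by case: ifP => _; [left; rewrite inE in_imfset ?orbT | right].
Qed.

End Labelling.

Section Construction.
Variables (q r : nat) (X1 X2 e : {fset nat}).
Hypotheses (r_gt0 : 0 < r) (card_X1 : #|` X1| = q) (card_X2 : #|` X2| = q)
  (S12 : complete_on r X1 `&` complete_on r X2 = [fset e]).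

Let e_in : e \in complete_on r X1 `&` complete_on r X2.
Proof. by rewrite S12 inE. Qed.
Let e_sub1 : e `<=` X1. Proof. by case/fsetIP: e_in => /complete_onP []. Qed.
Let e_sub2 : e `<=` X2. Proof. by case/fsetIP: e_in => _ /complete_onP []. Qed.
Let card_e : #|` e| = r. Proof. by case/fsetIP: e_in => /complete_onP []. Qed.

Let x1 := @enum_ext q e X1.
Let x2 := @enum_ext q e X2.

Let N0 := (\max_(u <- X1 `|` X2) u).+1.
Let N := (N0 + q)%N.

Let lt_N0 u : u \in X1 `|` X2 -> u < N0.
Proof. by move=> uX; rewrite ltnS; apply: (@leq_bigmax_seq _ _ xpredT id). Qed.

Let t (j : 'I_q) : nat := if j < r then x1 j else (N0 + j)%N.
Let T := [fset t j | j : 'I_q].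

Let x1_lt j : x1 j < N0.
Proof. by rewrite lt_N0 // inE enum_ext_in. Qed.
Let x2_lt j : x2 j < N0.
Proof. by rewrite lt_N0 // inE enum_ext_in ?orbT. Qed.
Let t_lt j : t j < N.
Proof. by rewrite /t; case: ifP => _; [rewrite ltn_addr | rewrite ltn_add2l]. Qed.

Let t_inj : injective t.
Proof.
move=> i j; rewrite /t; case: ifP => _; case: ifP => _.
- exact: enum_ext_inj.
- by move=> E; have := x1_lt i; rewrite E; lia.
- by move=> E; have := x1_lt j; rewrite -E; lia.
- by move/addnI/ord_inj.
Qed.

Let e_sub_T : e `<=` T.
Proof.
apply/fsubsetP => u ue; have := fsubsetP e_sub1 u ue.
rewrite -(enum_ext_image e_sub1 card_X1) => /imfsetP [j _ uE].
apply/imfsetP; exists j => //.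
by rewrite /t -(enum_ext_mem_head card_e e_sub1 card_X1) -uE ue.
Qed.

Let T_meet : T `&` (X1 `|` X2) `<=` e.
Proof.
apply/fsubsetP => _ /fsetIP [/imfsetP [j _ ->] tX]; move: tX; rewrite /t.
case: ifP => [lt_jr _|_ /lt_N0]; last by lia.
by rewrite (enum_ext_mem_head card_e e_sub1 card_X1).
Qed.

Let X12 : X1 `&` X2 `<=` e := complete_on_meet_sub r_gt0 S12.

Let p := s2val (prime_above q).
Let q_lt_p : q < p := s2valP (prime_above q).
Let p_prime : prime p := s2valP' (prime_above q).

Let al (j : 'I_q) : 'F_p := j%:R%R.

Let al_inj : injective al.
Proof.
move=> i j /(congr1 val); rewrite /= !val_Fp_nat // !modn_small => [/ord_inj //||];
  exact: ltn_trans (ltn_ord _) q_lt_p.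
Qed.

(* Even and odd offsets keep the fresh vertices of the two labellings apart. *)
Let fresh (k : nat) (x : 'I_q * 'F_p) : nat := (N + (enum_rank x).*2 + k)%N.

Let fresh_inj k : injective (fresh k).
Proof. by move=> x x' /addIn /addnI /double_inj /ord_inj /enum_rank_inj. Qed.

Let fresh_ge k x : N <= fresh k x.
Proof. by rewrite /fresh -addnA leq_addr. Qed.

Let phi1 := label r x1 t (fresh 0).
Let phi2 := label r t x2 (fresh 1).

Let phi1_inj : injective phi1.
Proof.
apply: (label_inj (N := N) (enum_ext_inj e_sub1 card_X1) t_inj (@fresh_inj 0)).
- by move=> i j; rewrite /t; case: ifP => // _ E; have := x1_lt i; rewrite /x1 E; lia.
- by move=> j; rewrite ltn_addr.
- exact: t_lt.
- exact: fresh_ge.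
Qed.

Let phi2_inj : injective phi2.
Proof.
apply: (label_inj (N := N) t_inj (enum_ext_inj e_sub2 card_X2) (@fresh_inj 1)).
- move=> i j; rewrite /t; case: ifP => _ E; last by have := x2_lt j; rewrite /x2 -E; lia.
  rewrite -(enum_ext_mem_head card_e e_sub2 card_X2) -E (fsubsetP X12) // inE.
  by rewrite enum_ext_in // E enum_ext_in.
- exact: t_lt.
- by move=> j; rewrite ltn_addr.
- exact: fresh_ge.
Qed.

Let G1 := design r al phi1 (fun _ => 0%R).
Let G2 := design r al phi2 (fun _ => 0%R).

Let trade1 : is_trade q r G1 (complete_on r X1) (complete_on r T).
Proof.
have := design_trade r al_inj phi1_inj (fun _ => 0%R) (fun _ => 0%R) (tail_ones _ r).
rewrite selection_label0 selection_label_tail_ones ?enum_ext_image //.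
by move=> j lt_jr; rewrite /t lt_jr.
Qed.

Let trade2 : is_trade q r G2 (complete_on r T) (complete_on r X2).
Proof.
have := design_trade r al_inj phi2_inj (fun _ => 0%R) (fun _ => 0%R) (tail_ones _ r).
rewrite selection_label0 selection_label_tail_ones ?enum_ext_image //.
by move=> j lt_jr; rewrite /t lt_jr; apply: enum_ext_head card_e lt_jr.
Qed.

Let lt_N u : u \in X1 `|` X2 `|` T -> u < N.
Proof.
case/fsetUP => [/lt_N0 lt_u|/imfsetP [j _ ->]]; last exact: t_lt.
exact: ltn_addr.
Qed.

Let fresh_notin k x : fresh k x \notin X1 `|` X2 `|` T.
Proof. by apply/negP => /lt_N; rewrite ltnNge fresh_ge. Qed.

Let vset_G1 u : u \in vset G1 -> u \in X1 `|` T \/ exists x, u = fresh 0 x.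
Proof.
move=> /(fsubsetP (vset_design _ _ _ _)) /imfsetP [x _ ->].
case: (label_cases r x1 t (fresh 0) x); last by right; exists x.
by rewrite enum_ext_image //; left.
Qed.

Let vset_G2 u : u \in vset G2 -> u \in T `|` X2 \/ exists x, u = fresh 1 x.
Proof.
move=> /(fsubsetP (vset_design _ _ _ _)) /imfsetP [x _ ->].
case: (label_cases r t x2 (fresh 1) x); last by right; exists x.
by rewrite enum_ext_image //; left.
Qed.

Let vset_G12 : vset G1 `&` vset G2 `<=` T.
Proof.
apply/fsubsetP => u /fsetIP [/vset_G1 u1 /vset_G2 u2].
case: u1 u2 => [u1|[x ->]] [u2|[x' E]].
- case/fsetUP: u1 => [u1|//]; case/fsetUP: u2 => [u2|u2] //.
  by apply: (fsubsetP e_sub_T); apply: (fsubsetP X12); rewrite inE u1.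
- by move: (fresh_notin 1 x'); rewrite -E !inE; case/fsetUP: u1 => ->; rewrite ?orbT.
- by move: (fresh_notin 0 x); rewrite !inE; case/fsetUP: u2 => ->; rewrite ?orbT.
- by move: E; rewrite /fresh; lia.
Qed.

Let vset_G1_meet : vset G1 `&` (X1 `|` X2) `<=` X1.
Proof.
apply/fsubsetP => u /fsetIP [/vset_G1 [/fsetUP [//|uT]|[x ->]] uX].
  by apply: (fsubsetP e_sub1); apply: (fsubsetP T_meet); rewrite inE uT.
by move: (fresh_notin 0 x); rewrite inE uX.
Qed.

Let vset_G2_meet : vset G2 `&` (X1 `|` X2) `<=` X2.
Proof.
apply/fsubsetP => u /fsetIP [/vset_G2 [/fsetUP [uT|//]|[x ->]] uX].
  by apply: (fsubsetP e_sub2); apply: (fsubsetP T_meet); rewrite inE uT.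
by move: (fresh_notin 1 x); rewrite inE uX.
Qed.

Lemma indep_hinge_complete_on :
  exists H, is_indep_hinge q r (complete_on r X1) (complete_on r X2) e H.
Proof.
have [rG1 _ _ _ _] := trade1; have [rG2 _ _ _ _] := trade2.
exists ((G1 `|` G2) `\` (complete_on r X1 `|` complete_on r X2)); split.
  exact: hinge_of_trades trade1 trade2 (rgraph_meet_sub rG1 vset_G12) S12.
apply: independentS (independent_trade_diff rG1 rG2 vset_G1_meet vset_G2_meet).
by apply: fsetUSS; apply: vset_complete_on.
Qed.

End Construction.

Theorem lemma2p5 (q r : nat) (S1 S2 : graph) (e : edge) :
  (1 <= r)%N -> (r < q)%N ->
  is_clique q r S1 -> is_clique q r S2 ->
  S1 `&` S2 = [fset e] ->
  exists H : graph, is_indep_hinge q r S1 S2 e H.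
Proof.
(* The construction does not need [r < q]. *)
move=> r_gt0 _ [X1 [card_X1 ->]] [X2 [card_X2 ->]] S12.
exact: indep_hinge_complete_on r_gt0 card_X1 card_X2 S12.
Qed.
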